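(* Let $\Omega=\{z\in\mathbb{C}:|z|=1\}$, $|\psi|<1$, and let $(Z_U,Z_V)$ have density $c(z_u,z_v)=\frac{1}{4\pi^2}\frac{1-|\psi|^2}{|1-\psi z_v\overline{z_u}|^2}$ on $\Omega\times\Omega$. Then for all $j,k\in\mathbb{Z}$, $$E(Z_U^jZ_V^k)=\begin{cases}\psi^j,& j=-k\ge0,\\ \overline{\psi}^{\,-j},& j=-k<0,\\ 0,&\text{otherwise.}\end{cases}$$
   Context: The density is with respect to arc-length measure on each circle; this distribution is denoted $BC_+(\psi)$. *)

From Stdlib Require Import Reals ZArith.
From Coquelicot Require Import Coquelicot.
Open Scope R_scope.

Definition Cpowz (z : C) (j : Z) : C :=
  match j with
  | Z0 => RtoC 1
  | Zpos p => Cpow z (Pos.to_nat p)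
  | Zneg p => Cpow (Cinv z) (Pos.to_nat p)
  end.

Definition circ (t : R) : C := (cos t, sin t).

(* density of BC_+(psi) with respect to arc-length on each circle *)
Definition bc_density (psi zu zv : C) : R :=
  / (4 * PI ^ 2) * ((1 - Cmod psi ^ 2) / (Cmod (RtoC 1 - psi * zv * Cconj zu)%C) ^ 2).

(* E(g(Z_U, Z_V)) for (Z_U,Z_V) ~ BC_+(psi): integral over Omega x Omega against
   arc-length x arc-length, Omega parametrized by t |-> e^{it}, t in [0, 2 pi]. *)
Definition bc_expect (psi : C) (g : C -> C -> C) : C :=
  @RInt C_R_CompleteNormedModule (fun t : R =>
    @RInt C_R_CompleteNormedModule
      (fun s : R => Cmult (RtoC (bc_density psi (circ t) (circ s))) (g (circ t) (circ s)))
      0 (2 * PI)) 0 (2 * PI).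

(* The density is a Poisson kernel: with c = psi e^{-it},
   (1 - |c|^2) / |1 - c e^{is}|^2 = 1/(1 - c e^{is}) + conj(1/(1 - c e^{is})) - 1.
   Integrating e^{iks}/(1 - c e^{is}) over the circle gives 2 pi c^{-k} for k <= 0 and 0 for
   k > 0 (the recurrence F(m) = c F(m+1) + 2 pi [m = 0] together with the bound
   |F(m)| <= 2 pi / (1 - |c|) pins these values down), so the inner integral over Z_V is
   e^{ijt} times the k-th Fourier coefficient of the kernel, which equals
   psi^{-k} e^{ikt} or conj(psi)^k e^{ikt}. Orthogonality of e^{i(j+k)t} then selects j = -k. *)
From Stdlib Require Import Reals ZArith Lra Lia.
From Coquelicot Require Import Coquelicot.
Open Scope R_scope.

Notation is_CInt := (@is_RInt C_R_NormedModule).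
Notation CInt := (@RInt C_R_CompleteNormedModule).

Lemma is_CInt_pair (f : R -> C) a b l1 l2 :
  is_RInt (fun t => fst (f t)) a b l1 -> is_RInt (fun t => snd (f t)) a b l2 ->
  is_CInt f a b (l1, l2).
Proof.
  intros; apply (is_RInt_fct_extend_pair (U:=R_NormedModule) (V:=R_NormedModule)); auto.
Qed.

Lemma is_CInt_fst (f : R -> C) a b l :
  is_CInt f a b l -> is_RInt (fun t => fst (f t)) a b (fst l).
Proof. intros; apply (is_RInt_fct_extend_fst (U:=R_NormedModule) (V:=R_NormedModule)); auto. Qed.

Lemma is_CInt_snd (f : R -> C) a b l :
  is_CInt f a b l -> is_RInt (fun t => snd (f t)) a b (snd l).
Proof. intros; apply (is_RInt_fct_extend_snd (U:=R_NormedModule) (V:=R_NormedModule)); auto. Qed.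

Lemma is_CInt_Cmult_l (c : C) (f : R -> C) a b l :
  is_CInt f a b l -> is_CInt (fun t => (c * f t)%C) a b (c * l)%C.
Proof.
  intros H.
  pose proof (is_CInt_fst _ _ _ _ H) as H1; pose proof (is_CInt_snd _ _ _ _ H) as H2.
  destruct c as [cr ci], l as [l1 l2]; simpl in *.
  apply is_CInt_pair; simpl.
  - apply (is_RInt_minus (V:=R_NormedModule)); apply (is_RInt_scal (V:=R_NormedModule)); assumption.
  - apply (is_RInt_plus (V:=R_NormedModule)); apply (is_RInt_scal (V:=R_NormedModule)); assumption.
Qed.

Lemma is_CInt_Cconj (f : R -> C) a b l :
  is_CInt f a b l -> is_CInt (fun t => Cconj (f t)) a b (Cconj l).
Proof.
  intros H.
  pose proof (is_CInt_fst _ _ _ _ H) as H1; pose proof (is_CInt_snd _ _ _ _ H) as H2.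
  destruct l as [l1 l2]; apply is_CInt_pair; simpl in *; auto.
  apply (is_RInt_opp (V:=R_NormedModule)); assumption.
Qed.

Lemma is_RInt_const_R (c a b v : R) : v = (b - a) * c -> is_RInt (fun _ => c) a b v.
Proof. intros ->; exact (is_RInt_const (V:=R_NormedModule) a b c). Qed.

Lemma circ0 : circ 0 = RtoC 1.
Proof. unfold circ, RtoC; rewrite cos_0, sin_0; reflexivity. Qed.

Lemma circ_add x y : circ (x + y) = (circ x * circ y)%C.
Proof. unfold circ, Cmult; simpl; rewrite cos_plus, sin_plus; f_equal; ring. Qed.

Lemma Cmod_circ x : Cmod (circ x) = 1.
Proof.
  unfold Cmod, circ; cbn [fst snd].
  replace (cos x ^ 2 + sin x ^ 2) with 1 by (rewrite <- (sin2_cos2 x); unfold Rsqr; ring).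
  apply sqrt_1.
Qed.

Lemma Cconj_circ t : Cconj (circ t) = circ (- t).
Proof. unfold Cconj, circ; cbn [fst snd]; rewrite cos_neg, sin_neg; reflexivity. Qed.

Lemma Cinv_circ t : Cinv (circ t) = circ (- t).
Proof.
  unfold Cinv, circ; cbn [fst snd]; rewrite cos_neg, sin_neg.
  replace (cos t ^ 2 + sin t ^ 2) with 1 by (rewrite <- (sin2_cos2 t); unfold Rsqr; ring).
  f_equal; field.
Qed.

Lemma Cpow_circ n t : Cpow (circ t) n = circ (INR n * t).
Proof.
  induction n as [|n IH]; simpl Cpow.
  - rewrite Rmult_0_l, circ0; reflexivity.
  - rewrite IH, S_INR, <- circ_add; f_equal; ring.
Qed.

Lemma IZR_pos_INR p : IZR (Zpos p) = INR (Pos.to_nat p).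
Proof. rewrite INR_IZR_INZ, positive_nat_Z; reflexivity. Qed.

Lemma Cpowz_circ t j : Cpowz (circ t) j = circ (IZR j * t).
Proof.
  destruct j as [|p|p]; simpl Cpowz.
  - rewrite Rmult_0_l, circ0; reflexivity.
  - rewrite Cpow_circ, IZR_pos_INR; reflexivity.
  - rewrite Cinv_circ, Cpow_circ, <- IZR_pos_INR, <- Pos2Z.opp_pos, opp_IZR.
    f_equal; ring.
Qed.

Lemma sin_IZR_mult_2PI (m : Z) : sin (IZR m * (2 * PI)) = 0.
Proof. apply sin_eq_0_1; exists (2 * m)%Z; rewrite mult_IZR; ring. Qed.

Lemma cos_IZR_mult_2PI (m : Z) : cos (IZR m * (2 * PI)) = 1.
Proof.
  replace (IZR m * (2 * PI)) with (2 * (IZR m * PI)) by ring.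
  rewrite cos_2a_sin, (sin_eq_0_1 (IZR m * PI)) by (exists m; ring); ring.
Qed.

Lemma is_RInt_of_antiderivative (F f : R -> R) a b v :
  (forall x, is_derive F x (f x)) -> (forall x, continuous f x) ->
  v = F b - F a -> is_RInt f a b v.
Proof.
  intros HF Hf ->.
  apply (is_RInt_derive (V:=R_CompleteNormedModule)); intros x _; auto.
Qed.

Lemma is_RInt_cos_IZR_mult (m : Z) :
  m <> 0%Z -> is_RInt (fun s => cos (IZR m * s)) 0 (2 * PI) 0.
Proof.
  intros Hm; assert (Hm' : IZR m <> 0) by (apply not_0_IZR; auto).
  apply (is_RInt_of_antiderivative (fun s => sin (IZR m * s) / IZR m)).
  - intros x; auto_derive; auto; field; auto.
  - intros x; apply (ex_derive_continuous (K:=R_AbsRing) (V:=R_NormedModule)); auto_derive; auto.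
  - rewrite Rmult_0_r, sin_0, sin_IZR_mult_2PI; field; auto.
Qed.

Lemma is_RInt_sin_IZR_mult (m : Z) :
  m <> 0%Z -> is_RInt (fun s => sin (IZR m * s)) 0 (2 * PI) 0.
Proof.
  intros Hm; assert (Hm' : IZR m <> 0) by (apply not_0_IZR; auto).
  apply (is_RInt_of_antiderivative (fun s => - cos (IZR m * s) / IZR m)).
  - intros x; auto_derive; auto; field; auto.
  - intros x; apply (ex_derive_continuous (K:=R_AbsRing) (V:=R_NormedModule)); auto_derive; auto.
  - rewrite Rmult_0_r, cos_0, cos_IZR_mult_2PI; field; auto.
Qed.

Lemma is_CInt_circ_IZR_mult (m : Z) :
  is_CInt (fun s => circ (IZR m * s)) 0 (2 * PI)
    (if Z.eqb m 0 then RtoC (2 * PI) else RtoC 0).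
Proof.
  destruct (Z.eqb_spec m 0) as [->|Hm]; apply is_CInt_pair; simpl.
  - apply (is_RInt_ext (fun _ => 1)); [intros; rewrite Rmult_0_l, cos_0; reflexivity|].
    apply is_RInt_const_R; ring.
  - apply (is_RInt_ext (fun _ => 0)); [intros; rewrite Rmult_0_l, sin_0; reflexivity|].
    apply is_RInt_const_R; ring.
  - apply is_RInt_cos_IZR_mult; auto.
  - apply is_RInt_sin_IZR_mult; auto.
Qed.

Lemma Cmod_1_minus_circ_lb c s : 1 - Cmod c <= Cmod (1 - c * circ s)%C.
Proof.
  pose proof (Cmod_triangle (1 - c * circ s) (c * circ s)) as H.
  replace (1 - c * circ s + c * circ s)%C with (RtoC 1) in H by ring.
  rewrite Cmod_1, Cmod_mult, Cmod_circ in H; lra.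
Qed.

Lemma one_minus_circ_neq0 c s : Cmod c < 1 -> (1 - c * circ s)%C <> 0%C.
Proof.
  intros Hc E; pose proof (Cmod_1_minus_circ_lb c s) as H.
  rewrite E, Cmod_0 in H; lra.
Qed.

Definition cauchy_integrand (c : C) (m : Z) (s : R) : C :=
  (circ (IZR m * s) / (1 - c * circ s))%C.

Definition cauchy_int (c : C) (m : Z) : C := CInt (cauchy_integrand c m) 0 (2 * PI).

Lemma ex_RInt_cauchy_integrand c m :
  Cmod c < 1 -> @ex_RInt C_R_NormedModule (cauchy_integrand c m) 0 (2 * PI).
Proof.
  intros Hc; destruct c as [cr ci].
  assert (Hd : forall s, (1 - (cr * cos s - ci * sin s)) ^ 2 + (- (cr * sin s + ci * cos s)) ^ 2 <> 0).
  { intros s Z; apply (one_minus_circ_neq0 (cr, ci) s Hc), Cmod_eq_0.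
    unfold Cmod; simpl; simpl in Z; transitivity (sqrt 0); [f_equal | apply sqrt_0].
    eapply eq_trans; [|exact Z]; ring. }
  assert (Hcont : forall g : R -> R,
    (forall z, ex_derive g z) -> ex_RInt g 0 (2 * PI)).
  { intros g Hg; apply (ex_RInt_continuous (V:=R_CompleteNormedModule)); intros z _.
    apply (ex_derive_continuous (K:=R_AbsRing) (V:=R_NormedModule)); auto. }
  assert (Hderiv : forall z, ex_derive (fun s => fst (cauchy_integrand (cr, ci) m s)) z
                         /\ ex_derive (fun s => snd (cauchy_integrand (cr, ci) m s)) z).
  { intros z; unfold cauchy_integrand, circ, Cdiv, Cminus, Cmult, Cinv, Cplus, Copp, RtoC; simpl.
    split; auto_derive; repeat split; try (intro Z; apply (Hd z); eapply eq_trans; [|exact Z]; ring). }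
  destruct (Hcont _ (fun z => proj1 (Hderiv z))) as [l1 H1].
  destruct (Hcont _ (fun z => proj2 (Hderiv z))) as [l2 H2].
  exists (l1, l2); apply is_CInt_pair; auto.
Qed.

Lemma is_CInt_cauchy c m :
  Cmod c < 1 -> is_CInt (cauchy_integrand c m) 0 (2 * PI) (cauchy_int c m).
Proof.
  intros Hc; apply (RInt_correct (V:=C_R_CompleteNormedModule)).
  apply ex_RInt_cauchy_integrand; auto.
Qed.

Lemma cauchy_int_rec c m : Cmod c < 1 ->
  cauchy_int c m = (c * cauchy_int c (m + 1) + (if Z.eqb m 0 then RtoC (2 * PI) else RtoC 0))%C.
Proof.
  intros Hc.
  assert (Hdiff : is_CInt (fun s => circ (IZR m * s)) 0 (2 * PI)
                    (cauchy_int c m - c * cauchy_int c (m + 1))%C).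
  { eapply is_RInt_ext;
      [|exact (is_RInt_minus (V:=C_R_NormedModule) _ _ _ _ _ _ (is_CInt_cauchy c m Hc)
                (is_CInt_Cmult_l c _ _ _ _ (is_CInt_cauchy c (m + 1) Hc)))].
    intros x _; unfold cauchy_integrand.
    rewrite plus_IZR, Rmult_plus_distr_r, Rmult_1_l, circ_add.
    pose proof (one_minus_circ_neq0 c x Hc).
    change (@eq C (circ (IZR m * x) / (1 - c * circ x)
                   - c * (circ (IZR m * x) * circ x / (1 - c * circ x)))%C (circ (IZR m * x))).
    field; auto. }
  pose proof (is_RInt_unique (V:=C_R_CompleteNormedModule) _ _ _ _ (is_CInt_circ_IZR_mult m)) as Hval.
  rewrite (is_RInt_unique (V:=C_R_CompleteNormedModule) _ _ _ _ Hdiff) in Hval.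
  transitivity ((cauchy_int c m - c * cauchy_int c (m + 1)) + c * cauchy_int c (m + 1))%C;
    [ring | rewrite Hval; apply Cplus_comm].
Qed.

Lemma Cmod_cauchy_int_le c m : Cmod c < 1 -> Cmod (cauchy_int c m) <= 2 * PI / (1 - Cmod c).
Proof.
  intros Hc; rewrite Cmod_norm; unfold Rdiv.
  replace (2 * PI) with (2 * PI - 0) by ring.
  apply (norm_RInt_le_const (V:=C_R_NormedModule) (cauchy_integrand c m));
    [pose proof PI_RGT_0; lra | | apply is_CInt_cauchy; auto].
  intros x _; rewrite <- Cmod_norm; unfold cauchy_integrand, Cdiv.
  rewrite Cmod_mult, Cmod_circ, Cmod_inv, Rmult_1_l by (apply one_minus_circ_neq0; auto).
  apply Rinv_le_contravar; [lra | apply Cmod_1_minus_circ_lb].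
Qed.

Lemma le_pow_mult_eq0 (x r B : R) :
  0 <= x -> 0 <= r < 1 -> (forall n, x <= r ^ n * B) -> x = 0.
Proof.
  intros Hx Hr H; destruct (Rle_lt_or_eq_dec 0 x Hx) as [Hp|]; auto; exfalso.
  assert (HB : 0 <= B) by (specialize (H O); simpl in H; lra).
  destruct (pow_lt_1_zero r ltac:(rewrite Rabs_pos_eq; lra) (x / (B + 1))) as [N HN];
    [apply Rdiv_lt_0_compat; lra|].
  specialize (HN N (le_n _)); rewrite Rabs_pos_eq in HN by (apply pow_le; lra).
  apply (Rmult_lt_compat_r (B + 1)) in HN; [|lra].
  unfold Rdiv in HN; rewrite Rmult_assoc, Rinv_l, Rmult_1_r in HN by lra.
  specialize (H N); assert (0 <= r ^ N) by (apply pow_le; lra); nra.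
Qed.

Lemma cauchy_int_shift c m n : Cmod c < 1 -> (0 < m)%Z ->
  cauchy_int c m = (c ^ n * cauchy_int c (m + Z.of_nat n))%C.
Proof.
  intros Hc Hm; induction n as [|n IH].
  - rewrite Z.add_0_r; simpl; ring.
  - rewrite IH, (cauchy_int_rec c (m + Z.of_nat n)) by auto.
    replace (m + Z.of_nat n =? 0)%Z with false by (symmetry; apply Z.eqb_neq; lia).
    replace (m + Z.of_nat n + 1)%Z with (m + Z.of_nat (S n))%Z by lia; simpl; ring.
Qed.

Lemma cauchy_int_pos c m : Cmod c < 1 -> (0 < m)%Z -> cauchy_int c m = 0%C.
Proof.
  intros Hc Hm; apply Cmod_eq_0.
  apply (le_pow_mult_eq0 _ (Cmod c) (2 * PI / (1 - Cmod c))); [apply Cmod_ge_0 | split; [apply Cmod_ge_0 | auto] |].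
  intros n; rewrite (cauchy_int_shift c m n Hc Hm), Cmod_mult, Cmod_pow.
  apply Rmult_le_compat_l; [apply pow_le, Cmod_ge_0 | apply Cmod_cauchy_int_le; auto].
Qed.

Lemma cauchy_int_nonpos c n : Cmod c < 1 ->
  cauchy_int c (- Z.of_nat n) = (c ^ n * RtoC (2 * PI))%C.
Proof.
  intros Hc; induction n as [|n IH].
  - rewrite (cauchy_int_rec c), (cauchy_int_pos c) by (auto; lia); simpl; ring.
  - rewrite (cauchy_int_rec c) by auto.
    replace (- Z.of_nat (S n) =? 0)%Z with false by (symmetry; apply Z.eqb_neq; lia).
    replace (- Z.of_nat (S n) + 1)%Z with (- Z.of_nat n)%Z by lia.
    rewrite IH; simpl; ring.
Qed.

Lemma poisson_kernel_Re (a : C) : Cmod a < 1 ->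
  RtoC ((1 - Cmod a ^ 2) / Cmod (RtoC 1 - a)%C ^ 2) = (/ (1 - a) + Cconj (/ (1 - a)) - 1)%C.
Proof.
  intros Ha; destruct a as [x y].
  assert (Hd : (1 - x) ^ 2 + y ^ 2 <> 0).
  { intros Z; assert (x = 1) as -> by nra; assert (y = 0) as -> by nra.
    change (Cmod (RtoC 1) < 1) in Ha; rewrite Cmod_1 in Ha; lra. }
  rewrite !Cmod2_alt; simpl Re; simpl Im.
  unfold RtoC, Cinv, Cconj, Cminus, Cplus, Copp; cbn [fst snd].
  f_equal; field; replace ((1 + - x) ^ 2 + (- y) ^ 2) with ((1 - x) ^ 2 + y ^ 2) by ring; exact Hd.
Qed.

(* [2 pi * poisson_coef c k] is the integral of e^{iks} against the Poisson kernel
   (1 - |c|^2) / |1 - c e^{is}|^2. *)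
Definition poisson_coef (c : C) (k : Z) : C :=
  if Z.leb k 0 then Cpow c (Z.to_nat (- k)) else Cpow (Cconj c) (Z.to_nat k).

Lemma is_CInt_poisson c k : Cmod c < 1 ->
  is_CInt (fun s => (RtoC ((1 - Cmod c ^ 2) / Cmod (RtoC 1 - c * circ s)%C ^ 2) * circ (IZR k * s))%C)
    0 (2 * PI) (RtoC (2 * PI) * poisson_coef c k)%C.
Proof.
  intros Hc.
  assert (Hkernel : forall s, (RtoC ((1 - Cmod c ^ 2) / Cmod (RtoC 1 - c * circ s)%C ^ 2)
      * circ (IZR k * s))%C
    = (cauchy_integrand c k s + Cconj (cauchy_integrand c (- k) s) - circ (IZR k * s))%C).
  { intros s; replace (Cmod c) with (Cmod (c * circ s)%C) by (rewrite Cmod_mult, Cmod_circ; ring).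
    rewrite poisson_kernel_Re by (rewrite Cmod_mult, Cmod_circ, Rmult_1_r; auto).
    unfold cauchy_integrand, Cdiv; rewrite Cmult_conj, Cconj_circ, opp_IZR.
    replace (- (- IZR k * s)) with (IZR k * s) by ring; ring. }
  eapply is_RInt_ext; [intros s _; symmetry; apply Hkernel|].
  replace (RtoC (2 * PI) * poisson_coef c k)%C with
    (cauchy_int c k + Cconj (cauchy_int c (- k)) - (if Z.eqb k 0 then RtoC (2 * PI) else RtoC 0))%C.
  - apply (is_RInt_minus (V:=C_R_NormedModule)); [apply (is_RInt_plus (V:=C_R_NormedModule))|];
      [apply is_CInt_cauchy | apply is_CInt_Cconj, is_CInt_cauchy | apply is_CInt_circ_IZR_mult]; auto.
  - assert (Hconj_real : forall r, Cconj (RtoC r) = RtoC r)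
      by (intros r; unfold RtoC, Cconj; simpl; f_equal; ring).
    unfold poisson_coef; destruct k as [|p|p]; cbn [Z.opp Z.eqb Z.to_nat].
    + change (Z.leb 0 0) with true; cbv iota.
      pose proof (cauchy_int_nonpos c 0 Hc) as H0; simpl in H0.
      rewrite H0, Cmult_1_l, Hconj_real; simpl; ring.
    + change (Z.leb (Z.pos p) 0) with false; cbv iota.
      rewrite (cauchy_int_pos c), <- Pos2Z.opp_pos, <- positive_nat_Z, (cauchy_int_nonpos c),
        Cmult_conj, Cpow_conj, Hconj_real by (auto; lia).
      ring.
    + change (Z.leb (Z.neg p) 0) with true; cbv iota.
      rewrite (cauchy_int_pos c (Z.pos p)), <- Pos2Z.opp_pos, <- positive_nat_Z,
        (cauchy_int_nonpos c) by (auto; lia).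
      replace (Cconj 0) with (RtoC 0) by (symmetry; apply Hconj_real).
      ring.
Qed.

Lemma poisson_coef_rotate c t k :
  poisson_coef (c * circ (- t)) k = (poisson_coef c k * circ (IZR k * t))%C.
Proof.
  unfold poisson_coef; destruct k as [|p|p]; cbn [Z.opp Z.to_nat].
  - change (Z.leb 0 0) with true; cbv iota.
    simpl; rewrite Rmult_0_l, circ0; ring.
  - change (Z.leb (Z.pos p) 0) with false; cbv iota.
    rewrite Cmult_conj, Cpow_mult_l, Cconj_circ, Cpow_circ, Ropp_involutive, IZR_pos_INR.
    reflexivity.
  - change (Z.leb (Z.neg p) 0) with true; cbv iota.
    rewrite Cpow_mult_l, Cpow_circ, <- Pos2Z.opp_pos, opp_IZR, IZR_pos_INR.
    f_equal; f_equal; ring.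
Qed.

Lemma is_CInt_bc_inner psi t j k : Cmod psi < 1 ->
  is_CInt (fun s => (RtoC (bc_density psi (circ t) (circ s)) * (Cpowz (circ t) j * Cpowz (circ s) k))%C)
    0 (2 * PI) (RtoC (/ (2 * PI)) * poisson_coef psi k * circ (IZR (j + k) * t))%C.
Proof.
  intros Hpsi; set (c := (psi * circ (- t))%C).
  assert (Hc : Cmod c = Cmod psi) by (unfold c; rewrite Cmod_mult, Cmod_circ; ring).
  replace (RtoC (/ (2 * PI)) * poisson_coef psi k * circ (IZR (j + k) * t))%C
    with (RtoC (/ (4 * PI ^ 2)) * circ (IZR j * t) * (RtoC (2 * PI) * poisson_coef c k))%C.
  - eapply is_RInt_ext; [|apply is_CInt_Cmult_l, is_CInt_poisson; rewrite Hc; auto].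
    intros s _; unfold bc_density.
    replace (psi * circ s * Cconj (circ t))%C with (c * circ s)%C
      by (unfold c; rewrite Cconj_circ; ring).
    rewrite Hc, RtoC_mult, !Cpowz_circ.
    match goal with |- ?a = ?b => change (@eq C a b) end; ring.
  - unfold c; rewrite poisson_coef_rotate, plus_IZR, Rmult_plus_distr_r, circ_add.
    replace (RtoC (/ (2 * PI))) with (RtoC (/ (4 * PI ^ 2)) * RtoC (2 * PI))%C
      by (rewrite <- RtoC_mult; f_equal; pose proof PI_RGT_0; field; lra).
    ring.
Qed.

Theorem mainTheorem8 (psi : C) (hpsi : Cmod psi < 1) (j k : Z) :
  bc_expect psi (fun zu zv => (Cpowz zu j * Cpowz zv k)%C) =
  if Z.eqb j (- k) then
    (if Z.leb 0 j then Cpowz psi j else Cpowz (Cconj psi) (- j))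
  else RtoC 0.
Proof.
  unfold bc_expect.
  rewrite (RInt_ext (V:=C_R_CompleteNormedModule) _
    (fun t => (RtoC (/ (2 * PI)) * poisson_coef psi k * circ (IZR (j + k) * t))%C))
    by (intros t _; apply (is_RInt_unique (V:=C_R_CompleteNormedModule)), is_CInt_bc_inner; auto).
  rewrite (is_RInt_unique (V:=C_R_CompleteNormedModule) _ _ _ _
    (is_CInt_Cmult_l _ _ _ _ _ (is_CInt_circ_IZR_mult (j + k)))).
  destruct (Z.eqb_spec j (- k)) as [->|Hjk].
  - rewrite Z.add_opp_diag_l; simpl Z.eqb; cbv iota.
    replace (RtoC (/ (2 * PI)) * poisson_coef psi k * RtoC (2 * PI))%C with (poisson_coef psi k)
      by (rewrite Cmult_comm, Cmult_assoc, <- RtoC_mult, Rinv_r, Cmult_1_l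
            by (pose proof PI_RGT_0; lra); reflexivity).
    unfold poisson_coef; destruct k as [|p|p]; reflexivity.
  - replace (j + k =? 0)%Z with false by (symmetry; apply Z.eqb_neq; lia); ring.
Qed.
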